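(* $\mathit{HM}^\ell_1(X)$ is freely generated by the ordered pairs of distinct adjacent points of $X$ at distance $\ell$ apart. In particular, $\mathit{HM}_1(X)=0$ (in all gradings $\ell$) if and only if $X$ is Menger convex.
   Context: Let $X$ be a metric space. A point $y$ is strictly between $x$ and $z$ if $d(x,y)+d(y,z)=d(x,z)$ and $x\neq y\neq z$. Two points are non-adjacent if some point lies strictly between them, and adjacent otherwise; $X$ is Menger convex if any two distinct points are non-adjacent. The magnitude homology $\mathit{HM}^\ell_n(X)$ is the degree-$n$ homology of the chain complex whose $n$-chains in grading $\ell$ are the free abelian group on symbols $\langle x_0,\dots,x_n\rangle$ with $x_i\neq x_{i+1}$ and $d(x_0,x_1)+\cdots+d(x_{n-1},x_n)=\ell$, with boundary $\sum_i(-1)^i d^i$, where $d^i$ deletes $x_i$ if $d(x_{i-1},x_i)+d(x_i,x_{i+1})=d(x_{i-1},x_{i+1})$ and is $0$ otherwise (deleting an endpoint always gives $0$). *)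

From HB Require Import structures.
From mathcomp Require Import all_boot all_order all_algebra.
From mathcomp Require Import boolp reals.
Set Implicit Arguments. Unset Strict Implicit. Unset Printing Implicit Defensive.
Import Order.TTheory GRing.Theory Num.Theory.
Local Open Scope ring_scope.

(** Prop-valued list membership (no decidable equality needed) *)
Fixpoint inl {A : Type} (x : A) (s : seq A) : Prop :=
  match s with [::] => False | y :: s' => y = x \/ inl x s' end.

Section Magnitude.
Variables (R : realType) (T : Type) (d : T -> T -> R).

Definition is_metric : Prop :=
  [/\ forall x y, 0 <= d x y,
      forall x y, d x y = 0 <-> x = y,
      forall x y, d x y = d y x
    & forall x y z, d x z <= d x y + d y z].

Definition strictly_between (x y z : T) : Prop :=
  d x y + d y z = d x z /\ x <> y /\ y <> z.
Definition nonadjacent (x z : T) : Prop := exists y, strictly_between x y z.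
Definition adjacent (x z : T) : Prop := ~ nonadjacent x z.
Definition menger_convex : Prop := forall x z, x <> z -> nonadjacent x z.

(** tuples <x_0,...,x_n> are represented as lists of length n+1 *)
Fixpoint path_len (x : T) (s : seq T) : R :=
  match s with [::] => 0 | y :: s' => d x y + path_len y s' end.
Definition tlen (s : seq T) : R :=
  match s with [::] => 0 | x :: s' => path_len x s' end.

Fixpoint consec_distinct (x : T) (s : seq T) : Prop :=
  match s with [::] => True | y :: s' => x <> y /\ consec_distinct y s' end.
Definition nondeg (s : seq T) : Prop :=
  match s with [::] => True | x :: s' => consec_distinct x s' end.

Definition is_gen (n : nat) (l : R) (s : seq T) : Prop :=
  [/\ size s = n.+1, nondeg s & tlen s = l].

(** a chain is a formal Z-linear combination of tuples, given as a list of
    (coefficient, tuple); two chains are equal when all coefficients agree *)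
Definition chain := seq (int * seq T).

Definition in_grading (n : nat) (l : R) (c : chain) : Prop :=
  forall p, inl p c -> is_gen n l p.2.

Definition coef (c : chain) (u : seq T) : int :=
  \sum_(p <- c) (if `[< p.2 = u >] then p.1 else 0).

Definition ceq (c c' : chain) : Prop := forall u, coef c u = coef c' u.

(** boundary of a single generator: sum_i (-1)^i d^i, where d^i deletes the
    interior point x_i if it lies between x_{i-1} and x_{i+1} (else 0);
    endpoint deletions are 0 *)
Definition bd_gen (s : seq T) : chain :=
  match s with
  | [::] => [::]
  | x0 :: _ =>
    [seq (((-1) ^+ i : int), take i s ++ drop i.+1 s)
    | i <- [seq i <- iota 1 (size s - 2)
           | `[< d (nth x0 s i.-1) (nth x0 s i) + d (nth x0 s i) (nth x0 s i.+1)
                 = d (nth x0 s i.-1) (nth x0 s i.+1) >]]]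
  end.

Definition bd (c : chain) : chain :=
  flatten [seq [seq (p.1 * q.1, q.2) | q <- bd_gen p.2] | p <- c].

Definition is_cycle (n : nat) (l : R) (c : chain) : Prop :=
  in_grading n l c /\ ceq (bd c) [::].

Definition is_boundary (n : nat) (l : R) (c : chain) : Prop :=
  exists b, in_grading n.+1 l b /\ ceq c (bd b).

Definition pairs_chain (a : seq (int * (T * T))) : chain :=
  [seq (p.1, [:: p.2.1; p.2.2]) | p <- a].

Definition adj_pair (l : R) (p : T * T) : Prop :=
  [/\ p.1 <> p.2, adjacent p.1 p.2 & d p.1 p.2 = l].

(** HM^l_1(X) is freely generated by the classes of the adjacent distinct
    pairs at distance l: they span ker d_1 / im d_2 and are independent. *)
Definition HM1_freely_generated (l : R) : Prop :=
  (forall c, is_cycle 1 l c ->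
     exists a b, (forall p, inl p a -> adj_pair l p.2) /\
                 in_grading 2 l b /\ ceq c (pairs_chain a ++ bd b)) /\
  (forall a, (forall p, inl p a -> adj_pair l p.2) ->
     is_boundary 1 l (pairs_chain a) -> ceq (pairs_chain a) [::]).

Definition HM1_trivial (l : R) : Prop :=
  forall c, is_cycle 1 l c -> is_boundary 1 l c.

End Magnitude.

From mathcomp Require Import all_boot all_order all_algebra.
From mathcomp Require Import boolp reals.

(* Every 1-chain <x, y> is a cycle.  If x and y are non-adjacent, with w
   strictly between them, then the 2-chain <x, w, y> has boundary -<x, y>,
   so modulo boundaries a 1-chain is a combination of adjacent pairs.
   Conversely, the boundary of a 2-chain <x, w, y> is either 0 or -<x, y>
   with w strictly between x and y, so a boundary has no adjacent pair in
   its support and a boundary that is a combination of adjacent pairs is 0.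
   For the Menger-convexity criterion, an adjacent pair <x, z> would be a
   cycle that is not a boundary. *)

Set Implicit Arguments. Unset Strict Implicit. Unset Printing Implicit Defensive.
Import Order.TTheory GRing.Theory Num.Theory.
Local Open Scope ring_scope.

Section MagnitudeHomologyDegreeOne.
Variables (R : realType) (T : Type) (d : T -> T -> R).

Lemma coef_nil (u : seq T) : coef [::] u = 0.
Proof. by rewrite /coef big_nil. Qed.

Lemma coef_cons (p : int * seq T) (c : chain T) u :
  coef (p :: c) u = (if `[< p.2 = u >] then p.1 else 0) + coef c u.
Proof. by rewrite /coef big_cons. Qed.

Lemma coef_cat (c1 c2 : chain T) u : coef (c1 ++ c2) u = coef c1 u + coef c2 u.
Proof. by rewrite /coef big_cat. Qed.

Lemma coef_cons_eq (k : int) (c : chain T) u : coef ((k, u) :: c) u = k + coef c u.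
Proof. by rewrite coef_cons /= asboolT. Qed.

Lemma in_grading_cons n l (p : int * seq T) (c : chain T) :
  in_grading d n l (p :: c) -> is_gen d n l p.2 /\ in_grading d n l c.
Proof. by move=> Hc; split=> [|q Hq]; apply: Hc; [left | right]. Qed.

Lemma bd_cons (p : int * seq T) (c : chain T) :
  bd d (p :: c) = [seq (p.1 * q.1, q.2) | q <- bd_gen d p.2] ++ bd d c.
Proof. by []. Qed.

Lemma bd_pairs_chain (a : seq (int * (T * T))) : bd d (pairs_chain a) = [::].
Proof. by elim: a. Qed.

Lemma bd_gen_triple x y z : bd_gen d [:: x; y; z] =
  if `[< d x y + d y z = d x z >] then [:: (-1, [:: x; z])] else [::].
Proof. by rewrite /bd_gen /=; case: ifP. Qed.

Lemma coef_bd_neq0_nonadjacent l (b : chain T) u :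
  in_grading d 2 l b -> coef (bd d b) u != 0 ->
  exists x z, u = [:: x; z] /\ nonadjacent d x z.
Proof.
elim: b => [|p b IH]; first by rewrite coef_nil eqxx.
move=> /in_grading_cons[[Hsize Hnd _] Hb].
rewrite bd_cons coef_cat; case: (eqVneq (coef (bd d b) u) 0) => [-> | ]; last first.
  by move=> Hu _; exact: IH.
case: p Hsize Hnd => k [|x [|y [|z [|? ?]]]] // _ [Hxy [Hyz _]].
rewrite bd_gen_triple addr0; case: asboolP => [Hxyz | _]; last by rewrite coef_nil eqxx.
rewrite coef_cons coef_nil addr0 /=; case: asboolP => [<- _ | _]; last by rewrite eqxx.
by exists x, z; split=> //; exists y.
Qed.

Lemma coef_pairs_chain_neq0 (a : seq (int * (T * T))) u :
  coef (pairs_chain a) u != 0 -> exists p, inl p a /\ u = [:: p.2.1; p.2.2].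
Proof.
elim: a => [|p a IH] /=; first by rewrite coef_nil eqxx.
rewrite coef_cons; case: asboolP => [<- _ | _]; first by exists p; split; [left |].
by rewrite add0r => /IH [q [Hq ->]]; exists q; split; [right |].
Qed.

Lemma homologous_adj_pairs l (c : chain T) : in_grading d 1 l c ->
  exists a b, (forall p, inl p a -> adj_pair d l p.2) /\
              in_grading d 2 l b /\ ceq c (pairs_chain a ++ bd d b).
Proof.
elim: c => [_ | p c IH /in_grading_cons [[Hsize Hnd Hlen] /IH]].
  by exists [::], [::].
move=> [a [b [Ha [Hb Hc]]]].
case: p Hsize Hnd Hlen => k [|x [|y [|? ?]]] //= _ [Hxy _]; rewrite addr0 => Hl.
have [Hadj | /contrapT [w [Hxwy [Hxw Hwy]]]] := pselect (adjacent d x y).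
  exists ((k, (x, y)) :: a), b; split; first by move=> q [<- | /Ha].
  by split=> // u /=; rewrite !coef_cons Hc.
exists a, ((- k, [:: x; w; y]) :: b); split=> //; split.
  by move=> q [<- | /Hb] //; split=> //=; rewrite addr0 Hxwy.
move=> u; rewrite bd_cons bd_gen_triple asboolT //= !coef_cat !coef_cons Hc coef_cat.
by rewrite mulrN1 opprK addrCA.
Qed.

Lemma adj_pairs_boundary_eq0 l (a : seq (int * (T * T))) :
  (forall p, inl p a -> adj_pair d l p.2) ->
  is_boundary d 1 l (pairs_chain a) -> ceq (pairs_chain a) [::].
Proof.
move=> Ha [b [Hb Hab]] u; rewrite coef_nil; apply/eqP/contraT => Hu.
have Hbu : coef (bd d b) u != 0 by rewrite -Hab.
have [p [Hp Hpu]] := coef_pairs_chain_neq0 Hu.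
have [x [z [Hxz Hnadj]]] := coef_bd_neq0_nonadjacent Hb Hbu.
have [_ Hadj _] := Ha p Hp; exfalso; apply: Hadj.
by move: Hpu; rewrite Hxz => -[<- <-].
Qed.

Lemma HM1_free_adj_pairs l : HM1_freely_generated d l.
Proof.
split=> [c [Hc _] | ]; [exact: homologous_adj_pairs | exact: adj_pairs_boundary_eq0].
Qed.

Lemma HM1_trivial_nonadjacent l x z :
  HM1_trivial d l -> x <> z -> d x z = l -> nonadjacent d x z.
Proof.
move=> Htriv Hxz Hl; apply: contrapT => Hadj.
pose a := [:: (1 : int, (x, z))].
have Ha p : inl p a -> adj_pair d l p.2 by move=> [<- | []].
have Hcycle : is_cycle d 1 l (pairs_chain a).
  split=> [q [<- | []] | u]; last by rewrite bd_pairs_chain.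
  by split=> //=; rewrite addr0.
have := adj_pairs_boundary_eq0 Ha (Htriv _ Hcycle) [:: x; z].
by rewrite /= coef_cons_eq coef_nil addr0.
Qed.

Lemma menger_HM1_trivial l : menger_convex d -> HM1_trivial d l.
Proof.
move=> Hconvex c [Hc _].
have [[|p a] [b [Ha [Hb Hcb]]]] := homologous_adj_pairs Hc; first by exists b.
by have [Hne Hadj _] := Ha p (or_introl erefl); case: Hadj; apply: Hconvex.
Qed.

End MagnitudeHomologyDegreeOne.

Theorem corollary7p6 (R : realType) (T : Type) (d : T -> T -> R) :
  is_metric d ->
  (forall l : R, HM1_freely_generated d l) /\
  ((forall l : R, HM1_trivial d l) <-> menger_convex d).
Proof.
move=> _; split; first exact: HM1_free_adj_pairs.
split=> [Htriv x z Hxz | Hconvex l]; last exact: menger_HM1_trivial.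
exact: HM1_trivial_nonadjacent (Htriv _) Hxz erefl.
Qed.
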